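(* Let $A$ be admissible and $\ell>0$ with $A(x)=A_\infty$ for all $x>\ell$. Let $\phi\in C_c^\infty(\mathbb{R})$ with $\operatorname{supp}\phi\subset(0,\infty)$ and let $u=u_\phi\in C^\infty([0,\infty)\times\mathbb{R})$ satisfy $\square_Au=0$ in $(0,\infty)\times\mathbb{R}$, $\partial_xu(0,t)=\phi(t)$ for $t\in\mathbb{R}$, and $u=0$ in $(0,\infty)\times(-\infty,0)$. Then there are constants $C,C'>0$ such that $$|u(0,t)-c(t)|\le Ce^{-C't}\quad\text{for all }t\in\mathbb{R},\qquad c(t):=-\frac{1}{A_\infty}\int_0^t\phi(s)\,ds.$$
   Context: A function $A:\mathbb{R}\to\mathbb{R}$ is admissible if $A\in C^\infty(\mathbb{R})$, $A>0$, and there are $x_+>x_->0$ and $A_\infty>0$ with $A(x)=1$ for $x<x_-$ and $A(x)=A_\infty$ for $x>x_+$. $\square_Au:=\partial_t^2u-\frac{1}{A(x)}\partial_x(A(x)\partial_xu)$. *)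

From Stdlib Require Import Reals.
From Coquelicot Require Import Coquelicot.
Open Scope R_scope.

Definition smooth1 (f : R -> R) : Prop :=
  forall (n : nat) (x : R), ex_derive (Derive_n f n) x.

Definition Dx (f : R -> R -> R) : R -> R -> R :=
  fun x t => Derive (fun y => f y t) x.
Definition Dt (f : R -> R -> R) : R -> R -> R :=
  fun x t => Derive (fun s => f x s) t.

(* Iterated mixed partial derivative: true = d/dx, false = d/dt. *)
Fixpoint pderiv (l : list bool) (f : R -> R -> R) : R -> R -> R :=
  match l with
  | nil => f
  | cons b l' => if b then Dx (pderiv l' f) else Dt (pderiv l' f)
  end.

Definition smooth2 (f : R -> R -> R) : Prop :=
  forall l : list bool,
    (forall x t, ex_derive (fun y => pderiv l f y t) x) /\
    (forall x t, ex_derive (fun s => pderiv l f x s) t) /\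
    (forall p : R * R, continuous (fun q : R * R => pderiv l f (fst q) (snd q)) p).

(* C^infinity on the closed half-space [0,oo) x R (x first, t second):
   restriction of a C^infinity function on R^2. *)
Definition smooth_half (u : R -> R -> R) : Prop :=
  exists U : R -> R -> R, smooth2 U /\ forall x t, 0 <= x -> U x t = u x t.

Definition admissible (A : R -> R) : Prop :=
  smooth1 A /\ (forall x, 0 < A x) /\
  exists xm xp Ainf : R, 0 < xm /\ xm < xp /\ 0 < Ainf /\
    (forall x, x < xm -> A x = 1) /\ (forall x, xp < x -> A x = Ainf).

Definition boxA (A : R -> R) (u : R -> R -> R) (x t : R) : R :=
  Dt (Dt u) x t - / A x * Derive (fun y => A y * Dx u y t) x.

Definition test_fun_pos (phi : R -> R) : Prop :=
  smooth1 phi /\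
  exists a b : R, 0 < a /\ a <= b /\ forall t, (t < a \/ b < t) -> phi t = 0.

From Pilot Require Import Defs.
From Stdlib Require Import Reals Lra Psatz.
From Coquelicot Require Import Coquelicot.
Open Scope R_scope.

(* For x >= l the coefficient is constant, so u_t + u_x is transported along
   the characteristics x + t = const and vanishes because u vanishes in the
   past: the solution is outgoing at x = l.  Once phi has stopped, the energy
   E(t) = int_0^l A (u_t^2 + u_x^2) / 2 therefore decreases at the rate
   A_inf u_t(l,t)^2, while the Morawetz quantity M(t) = int_0^l e^(Kx) A u_t u_x,
   with K A >= A + |A'|, satisfies M' <= e^(Kl) A_inf u_t(l,t)^2 - E.  Hence
   E + M / (2 e^(Kl)) is a Lyapunov function and E decays exponentially.
   Integrating the equation over [0, l] shows that
   int_0^l A u_t + A_inf u(l,.) + int_0^t phi is conserved, hence zero, so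
   u(0,t) - c(t) = - int_0^l (u_x + A u_t / A_inf), which is controlled by E. *)

Notation Ux U := (pderiv (cons true nil) U).
Notation Ut U := (pderiv (cons false nil) U).
Notation Uxx U := (pderiv (cons true (cons true nil)) U).
Notation Utt U := (pderiv (cons false (cons false nil)) U).
Notation Utx U := (pderiv (cons true (cons false nil)) U).
Notation Uxt U := (pderiv (cons false (cons true nil)) U).

Lemma ball_R (x e y : R) : ball x e y <-> Rabs (y - x) < e.
Proof. unfold ball; simpl; unfold AbsRing_ball, abs, minus, plus, opp; simpl. tauto. Qed.

Lemma is_derive_right_quotient (f : R -> R) x l : is_derive f x l ->
  filterlim (fun h => (f (x + h) - f x) / h) (at_right 0) (locally l).
Proof.
  intros H. apply is_derive_Reals in H.
  apply filterlim_locally. intros eps.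
  destruct (H eps (cond_pos eps)) as [d Hd].
  exists d. intros h Hh Hh0. apply ball_R in Hh. apply ball_R.
  apply Hd; [lra |]. replace h with (h - 0) by ring. exact Hh.
Qed.

Lemma continuous_eq_on_right (f : R -> R) a c :
  continuous f a -> (forall y, a < y -> f y = c) -> f a = c.
Proof.
  intros Hc Hy.
  apply (@filterlim_locally_unique _ _ _ (at_right a)
           (Proper_StrongProper _ (at_right_proper_filter a)) f).
  - apply (filterlim_filter_le_1 (F := locally a) f). apply filter_le_within. exact Hc.
  - apply filterlim_ext_loc with (fun _ => c).
    + exists (mkposreal 1 Rlt_0_1). intros y _ H. symmetry. now apply Hy.
    + apply filterlim_const.
Qed.

Lemma Derive_locally_const (f : R -> R) x c : locally x (fun y => f y = c) -> Derive f x = 0.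
Proof. intros H. rewrite (Derive_ext_loc f (fun _ => c)); auto using Derive_const. Qed.

Lemma is_derive_continuous (f : R -> R) x l : is_derive f x l -> continuous f x.
Proof. intros H. exact (ex_derive_continuous f x (ex_intro _ l H)). Qed.

Lemma ex_derive_continuity_pt (f : R -> R) x : ex_derive f x -> continuity_pt f x.
Proof. intros H. apply continuity_pt_filterlim. exact (ex_derive_continuous f x H). Qed.

Lemma ex_RInt_continuous_R (f : R -> R) a b : (forall z, continuous f z) -> ex_RInt f a b.
Proof. intros H. apply (@ex_RInt_continuous R_CompleteNormedModule). intros; apply H. Qed.

Lemma RInt_of_is_RInt (f : R -> R) a b v : is_RInt f a b v -> RInt f a b = v.
Proof. exact (@is_RInt_unique R_CompleteNormedModule f a b v). Qed.

Lemma continuity_pt_exp_scal K x : continuity_pt (fun x => exp (K * x)) x.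
Proof. reg. Qed.

Lemma exp_monotone x y : x <= y -> exp x <= exp y.
Proof. intros [H|H]; [left; apply exp_increasing; auto | subst; right; auto]. Qed.

Lemma nonincreasing_of_derive_nonpos (h dh : R -> R) b t :
  (forall s, is_derive h s (dh s)) -> (forall s, b <= s -> dh s <= 0) -> b <= t -> h t <= h b.
Proof.
  intros Hd Hn Hbt. destruct (MVT_gen h b t dh) as [c [Hc Heq]].
  - intros; apply Hd.
  - intros; apply continuity_pt_filterlim; eapply is_derive_continuous; apply Hd.
  - rewrite Rmin_left, Rmax_right in Hc by lra.
    assert (dh c <= 0) by (apply Hn; lra). nra.
Qed.

Lemma continuity_2d_pt_swap f x y :
  continuity_2d_pt f x y -> continuity_2d_pt (fun u v => f v u) y x.
Proof. intros H eps. destruct (H eps) as [d Hd]. exists d. intros u v H1 H2. now apply Hd. Qed.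

Lemma continuity_2d_pt_snd (g : R -> R) s x :
  continuity_pt g x -> continuity_2d_pt (fun _ y => g y) s x.
Proof.
  intros H. apply (continuity_1d_2d_pt_comp g (fun _ y => y)); auto.
  apply continuity_2d_pt_id2.
Qed.

Lemma continuity_2d_pt_continuous_snd f s x :
  continuity_2d_pt f s x -> continuous (fun y => f s y) x.
Proof.
  intros H. apply continuity_2d_pt_filterlim in H.
  apply (continuous_comp_2 (fun _ : R => s) (fun y : R => y) f).
  - apply continuous_const.
  - apply continuous_id.
  - exact H.
Qed.

Lemma is_derive_RInt_param_2d (f df : R -> R -> R) a b t :
  (forall s x, is_derive (fun s => f s x) s (df s x)) ->
  (forall s x, continuity_2d_pt df s x) ->
  (forall s x, continuity_2d_pt f s x) ->
  is_derive (fun s => RInt (fun x => f s x) a b) t (RInt (fun x => df t x) a b).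
Proof.
  intros Hd Hdc Hc.
  assert (E : RInt (fun x => df t x) a b = RInt (fun x => Derive (fun u => f u x) t) a b).
  { apply RInt_ext; intros; symmetry; apply is_derive_unique; auto. }
  rewrite E. apply is_derive_RInt_param.
  - apply filter_forall; intros; eexists; apply Hd.
  - intros; apply continuity_2d_pt_ext with df; auto.
    intros; symmetry; apply is_derive_unique; auto.
  - apply filter_forall; intros y; apply ex_RInt_continuous_R; intros.
    apply continuity_2d_pt_continuous_snd; auto.
Qed.

Section SmoothField.

Variable U : R -> R -> R.
Hypothesis HU : smooth2 U.

Lemma is_derive_pderiv_x l x t :
  is_derive (fun y => pderiv l U y t) x (pderiv (cons true l) U x t).
Proof. destruct (HU l) as [H _]. exact (Derive_correct _ _ (H x t)). Qed.

Lemma is_derive_pderiv_t l x t :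
  is_derive (fun s => pderiv l U x s) t (pderiv (cons false l) U x t).
Proof. destruct (HU l) as [_ [H _]]. exact (Derive_correct _ _ (H x t)). Qed.

Lemma continuity_2d_pderiv l x t : continuity_2d_pt (pderiv l U) x t.
Proof. destruct (HU l) as [_ [_ H]]. apply continuity_2d_pt_filterlim. exact (H (x, t)). Qed.

Lemma continuity_2d_pderiv_swap l s x : continuity_2d_pt (fun s x => pderiv l U x s) s x.
Proof. apply continuity_2d_pt_swap, continuity_2d_pderiv. Qed.

Lemma continuous_pderiv_x l x t : continuous (fun y => pderiv l U y t) x.
Proof. exact (is_derive_continuous _ _ _ (is_derive_pderiv_x l x t)). Qed.

Lemma continuous_pderiv_t l x t : continuous (fun s => pderiv l U x s) t.
Proof. exact (is_derive_continuous _ _ _ (is_derive_pderiv_t l x t)). Qed.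

Lemma pderiv_tx_comm x t : Utx U x t = Uxt U x t.
Proof.
  apply (Schwarz U x t).
  - exists (mkposreal 1 Rlt_0_1). intros y s _ _.
    destruct (HU nil) as [H1 [H2 _]].
    destruct (HU (cons false nil)) as [H3 _]. destruct (HU (cons true nil)) as [_ [H4 _]].
    repeat split; [apply H1 | apply H2 | apply H3 | apply H4].
  - apply (continuity_2d_pderiv (cons true (cons false nil))).
  - apply (continuity_2d_pderiv (cons false (cons true nil))).
Qed.

End SmoothField.

Ltac solve_continuity_2d HU :=
  repeat first [ apply continuity_2d_pt_mult | apply continuity_2d_pt_plus
               | apply continuity_2d_pt_minus | apply continuity_2d_pt_opp
               | apply continuity_2d_pt_const | apply (continuity_2d_pderiv_swap _ HU)
               | apply continuity_2d_pt_snd ].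

Ltac solve_ex_derive_pderiv HU :=
  repeat split;
  try (first [ exact (proj1 (proj2 (HU nil)) _ _)
             | exact (proj1 (proj2 (HU (cons false nil))) _ _)
             | exact (proj1 (proj2 (HU (cons true nil))) _ _)
             | exact (proj1 (HU nil) _ _)
             | exact (proj1 (HU (cons false nil)) _ _)
             | exact (proj1 (HU (cons true nil)) _ _) ]).

Ltac unfold_pderiv_field := simpl pderiv; unfold Dt, Defs.Dx; field.

Lemma weighted_energy_density_le e A A' K a b : 1 <= e -> 0 < A -> A + Rabs A' <= K * A ->
  A * (a * a + b * b) / 2 <= e * ((K * A + A') * a * a + (K * A - A') * b * b) / 2.
Proof.
  intros He HA HK.
  assert (H1 : A <= K * A + A') by (pose proof (Rle_abs (- A')); rewrite Rabs_Ropp in H; lra).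
  assert (H2 : A <= K * A - A') by (pose proof (Rle_abs A'); lra).
  assert (Ha : 0 <= a * a) by nra. assert (Hb : 0 <= b * b) by nra.
  assert (A * (a * a + b * b) <= (K * A + A') * a * a + (K * A - A') * b * b) by nra.
  assert (0 <= (K * A + A') * a * a + (K * A - A') * b * b) by nra.
  nra.
Qed.

Lemma Rabs_cross_term_le e E A a b : 0 < e -> e <= E -> 0 < A ->
  Rabs (e * A * a * b) <= E * (A * (a * a + b * b) / 2).
Proof.
  intros He HE HA.
  pose proof (Rle_0_sqr (a - b)) as Hm. pose proof (Rle_0_sqr (a + b)) as Hp.
  unfold Rsqr in *.
  assert (HeA : 0 <= e * A) by (apply Rmult_le_pos; lra).
  assert (G1 := Rmult_le_pos _ _ HeA Hm). assert (G2 := Rmult_le_pos _ _ HeA Hp).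
  assert (G3 : 0 <= (E - e) * (A * (a * a + b * b))).
  { apply Rmult_le_pos; [lra|]. apply Rmult_le_pos; nra. }
  destruct (Rle_or_lt 0 (e * A * a * b)) as [Hpos|Hneg];
    [rewrite Rabs_pos_eq by lra | rewrite Rabs_left by lra]; lra.
Qed.

Lemma Rabs_le_amgm d p : 0 < d -> Rabs p <= (d * (p * p) + / d) / 2.
Proof.
  intros Hd. assert (H := Rle_0_sqr (d * Rabs p - 1)). unfold Rsqr in H.
  assert (Hp : Rabs p * Rabs p = p * p) by (rewrite <- Rabs_mult; apply Rabs_pos_eq; nra).
  apply (Rmult_le_reg_l d); [lra|].
  replace (d * ((d * (p * p) + / d) / 2)) with ((d * d * (p * p) + 1) / 2) by (field; lra).
  rewrite <- Hp. nra.
Qed.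

(* AM-GM with a free parameter [d] instead of Cauchy-Schwarz; [d] is later
   taken to be [exp (k t / 2)]. *)
Lemma trace_integrand_le al A Amax Ainf d p q :
  0 < al -> al <= A -> A <= Amax -> 0 < Ainf -> 0 < d ->
  Rabs (p + / Ainf * (A * q)) <=
    (1 + Amax / Ainf) / 2 * (d * (2 / al) * (A * (q * q + p * p) / 2) + / d).
Proof.
  intros Hal HA HAm HAi Hd.
  set (X := (d * (2 / al) * (A * (q * q + p * p) / 2) + / d) / 2).
  assert (Hsq : p * p <= 2 / al * (A * (q * q + p * p) / 2) /\
                q * q <= 2 / al * (A * (q * q + p * p) / 2)).
  { replace (2 / al * (A * (q * q + p * p) / 2)) with (A * (q * q + p * p) / al) by (field; lra).
    split; apply (Rmult_le_reg_l al); try lra;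
      replace (al * (A * (q * q + p * p) / al)) with (A * (q * q + p * p)) by (field; lra); nra. }
  assert (HpX : Rabs p <= X).
  { eapply Rle_trans; [apply (Rabs_le_amgm d p Hd)|]. unfold X.
    assert (d * (p * p) <= d * (2 / al * (A * (q * q + p * p) / 2)))
      by (apply Rmult_le_compat_l; lra). lra. }
  assert (HqX : Rabs q <= X).
  { eapply Rle_trans; [apply (Rabs_le_amgm d q Hd)|]. unfold X.
    assert (d * (q * q) <= d * (2 / al * (A * (q * q + p * p) / 2)))
      by (apply Rmult_le_compat_l; lra). lra. }
  replace ((1 + Amax / Ainf) / 2 * (d * (2 / al) * (A * (q * q + p * p) / 2) + / d))
    with (X + / Ainf * (Amax * X)) by (unfold X; field; lra).
  eapply Rle_trans; [apply Rabs_triang|]. apply Rplus_le_compat; auto.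
  assert (HAi' : 0 < / Ainf) by (apply Rinv_0_lt_compat; lra).
  rewrite Rabs_mult, Rabs_mult, (Rabs_pos_eq (/ Ainf)), (Rabs_pos_eq A) by lra.
  apply Rmult_le_compat_l; [lra|]. apply Rmult_le_compat; try lra. apply Rabs_pos.
Qed.

(* The Lyapunov function is [F = E + M / (2c)], comparable to [E] and satisfying
   [F' <= -(2/3) F / (2c)]. *)
Lemma Lyapunov_exp_decay (E M dE dM : R -> R) (c b : R) :
  (forall t, is_derive E t (dE t)) -> (forall t, is_derive M t (dM t)) ->
  (forall t, 0 <= E t) -> (forall t, Rabs (M t) <= c * E t) -> 0 < c ->
  (forall t, b <= t -> dE t + / (2 * c) * dM t <= - / (2 * c) * E t) ->
  exists k B, 0 < k /\ forall t, b <= t -> E t <= B * exp (- k * t).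
Proof.
  intros HdE HdM HE0 HM Hc Hder.
  set (eps := / (2 * c)).
  assert (Heps : 0 < eps) by (unfold eps; apply Rinv_0_lt_compat; lra).
  assert (Hepsc : eps * c = / 2) by (unfold eps; field; lra).
  set (F := fun t => E t + eps * M t).
  assert (HF : forall t, E t / 2 <= F t <= 3 * E t / 2).
  { intros t. unfold F. specialize (HM t). apply Rabs_le_between in HM.
    assert (eps * M t <= eps * c * E t /\ - (eps * c * E t) <= eps * M t) by (split; nra).
    rewrite Hepsc in H. lra. }
  set (k := 2 / 3 * eps).
  set (h := fun t => F t * exp (k * t)).
  set (dh := fun t => (dE t + eps * dM t + k * F t) * exp (k * t)).
  assert (Hdh : forall t, is_derive h t (dh t)).
  { intros t. unfold h, dh, F. auto_derive.
    - split; [eexists; apply HdE | split; [eexists; apply HdM | auto]].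
    - replace (Derive (fun x => E x) t) with (dE t) by (symmetry; apply is_derive_unique, HdE).
      replace (Derive (fun x => M x) t) with (dM t) by (symmetry; apply is_derive_unique, HdM).
      ring. }
  assert (Hdh_nonpos : forall s, b <= s -> dh s <= 0).
  { intros s Hs. unfold dh. specialize (Hder s Hs). fold eps in Hder.
    assert (k * F s <= eps * E s) by (specialize (HF s); unfold k; nra).
    assert (0 < exp (k * s)) by apply exp_pos. nra. }
  exists k, (2 * h b). split; [unfold k; lra|].
  intros t Ht. assert (Hh := nonincreasing_of_derive_nonpos h dh b t Hdh Hdh_nonpos Ht).
  assert (Ft : F t = h t * exp (- k * t)).
  { unfold h. rewrite Rmult_assoc, <- exp_plus.
    replace (k * t + - k * t) with 0 by ring. rewrite exp_0. ring. }
  specialize (HF t). assert (0 < exp (- k * t)) by apply exp_pos. nra.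
Qed.

Lemma exp_decay_of_eventual (E : R -> R) (k B b : R) :
  (forall t, continuity_pt E t) -> (forall t, 0 <= E t) -> (forall t, t < 0 -> E t = 0) ->
  0 <= b -> 0 < k -> (forall t, b <= t -> E t <= B * exp (- k * t)) ->
  exists B', 0 <= B' /\ forall t, E t <= B' * exp (- k * t).
Proof.
  intros HEc HE0 Hpast Hb Hk Hlate.
  destruct (continuity_ab_maj E 0 b Hb (fun c _ => HEc c)) as [mx [Hmx _]].
  assert (Hmx0 : 0 <= E mx * exp (k * b)).
  { apply Rmult_le_pos; [apply HE0 | left; apply exp_pos]. }
  exists (Rmax B (E mx * exp (k * b))). split; [eapply Rle_trans; [exact Hmx0 | apply Rmax_r]|].
  intros t. assert (Hex : 0 < exp (- k * t)) by apply exp_pos.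
  destruct (Rlt_or_le t 0) as [Ht|Ht].
  - rewrite (Hpast t Ht). apply Rmult_le_pos; [|lra].
    eapply Rle_trans; [exact Hmx0 | apply Rmax_r].
  - destruct (Rle_or_lt t b) as [Htb|Htb].
    + apply Rle_trans with (E mx * exp (k * b) * exp (- k * t)).
      * rewrite Rmult_assoc, <- exp_plus.
        assert (1 <= exp (k * b + - k * t)) by (rewrite <- exp_0; apply exp_monotone; nra).
        assert (0 <= E mx) by apply HE0. specialize (Hmx t (conj Ht Htb)). nra.
      * apply Rmult_le_compat_r; [lra | apply Rmax_r].
    + eapply Rle_trans; [apply Hlate; lra|].
      apply Rmult_le_compat_r; [lra | apply Rmax_l].
Qed.

Definition energy_density (A : R -> R) (U : R -> R -> R) s x :=
  A x * (Ut U x s * Ut U x s + Ux U x s * Ux U x s) / 2.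

Definition energy (A : R -> R) (U : R -> R -> R) l s := RInt (energy_density A U s) 0 l.

Definition morawetz (K : R) (A : R -> R) (U : R -> R -> R) l s :=
  RInt (fun x => exp (K * x) * A x * Ut U x s * Ux U x s) 0 l.

Definition momentum (A : R -> R) (U : R -> R -> R) l s := RInt (fun x => A x * Ut U x s) 0 l.

Lemma wave_equation_of_boxA (A : R -> R) (u U : R -> R -> R) :
  (forall x t, 0 <= x -> U x t = u x t) -> smooth2 U ->
  (forall x, ex_derive A x) -> (forall x, 0 < A x) ->
  (forall x t, 0 < x -> boxA A u x t = 0) ->
  forall x t, 0 < x -> A x * Utt U x t = Derive A x * Ux U x t + A x * Uxx U x t.
Proof.
  intros Heq HU HA HApos Hbox x t Hx.
  assert (Hnear : locally x (fun y => 0 < y)) by exact (open_gt 0 x Hx).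
  assert (Htt : Dt (Dt u) x t = Utt U x t).
  { simpl. unfold Dt. apply Derive_ext. intros s. apply Derive_ext. intros s'.
    symmetry; apply Heq; lra. }
  assert (Hflux : Derive (fun y => A y * Defs.Dx u y t) x =
                  Derive A x * Ux U x t + A x * Uxx U x t).
  { rewrite (Derive_ext_loc _ (fun y => A y * Defs.Dx U y t)).
    - apply is_derive_unique, (is_derive_mult A (fun y => Defs.Dx U y t)).
      + apply Derive_correct, HA.
      + apply (is_derive_pderiv_x U HU (cons true nil)).
      + intros; apply Rmult_comm.
    - apply (filter_imp (fun y => 0 < y)); [|exact Hnear].
      intros y Hy. f_equal. unfold Defs.Dx. apply Derive_ext_loc.
      apply (filter_imp (fun z => 0 < z)); [|exact (open_gt 0 y Hy)].
      intros z Hz. symmetry. apply Heq. lra. }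
  specialize (Hbox x t Hx). unfold boxA in Hbox. rewrite Htt, Hflux in Hbox.
  assert (HA0 := HApos x).
  apply (Rmult_eq_reg_l (/ A x)); [| apply Rinv_neq_0_compat; lra].
  rewrite <- Rmult_assoc, Rinv_l by lra. lra.
Qed.

Lemma neumann_trace_of_extension (phi : R -> R) (u U : R -> R -> R) :
  (forall x t, 0 <= x -> U x t = u x t) -> smooth2 U ->
  (forall t, filterlim (fun h => (u h t - u 0 t) / h) (at_right 0) (locally (phi t))) ->
  forall t, Ux U 0 t = phi t.
Proof.
  intros Heq HU Hn t.
  apply (@filterlim_locally_unique _ _ _ (at_right 0)
           (Proper_StrongProper _ (at_right_proper_filter 0)) (fun h => (u h t - u 0 t) / h)).
  - apply filterlim_ext_loc with (fun h => (U (0 + h) t - U 0 t) / h).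
    + exists (mkposreal 1 Rlt_0_1). intros h _ H.
      rewrite Rplus_0_l, !Heq by lra. reflexivity.
    + apply (is_derive_right_quotient (fun y => U y t)), (is_derive_pderiv_x U HU nil).
  - apply Hn.
Qed.

Section WaveOnHalfLine.

Variables (A : R -> R) (U : R -> R -> R) (Ainf l : R).
Hypothesis HU : smooth2 U.
Hypothesis HAd : forall x, ex_derive A x.
Hypothesis HA'c : forall x, continuity_pt (Derive A) x.
Hypothesis HApos : forall x, 0 < A x.
Hypothesis Hl : 0 < l.
Hypothesis HAl : forall x, l < x -> A x = Ainf.
Hypothesis Hwave : forall x t, 0 < x -> A x * Utt U x t = Derive A x * Ux U x t + A x * Uxx U x t.
Hypothesis Hpast : forall x t, 0 < x -> t < 0 -> U x t = 0.

Lemma A_continuity_pt x : continuity_pt A x.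
Proof. exact (ex_derive_continuity_pt A x (HAd x)). Qed.

Lemma Ainf_pos : 0 < Ainf.
Proof. rewrite <- (HAl (l + 1)) by lra. apply HApos. Qed.

Lemma A_at_l : A l = Ainf.
Proof.
  apply continuous_eq_on_right; auto.
  apply continuity_pt_filterlim, A_continuity_pt.
Qed.

Lemma pderiv_vanish_past x t : 0 < x -> t < 0 -> Ut U x t = 0 /\ Ux U x t = 0.
Proof.
  intros Hx Ht. split; simpl; unfold Dt, Defs.Dx.
  - apply Derive_locally_const with 0. apply (filter_imp (fun s => s < 0)).
    + intros s Hs. now apply Hpast.
    + apply (open_lt 0 t Ht).
  - apply Derive_locally_const with 0. apply (filter_imp (fun y => 0 < y)).
    + intros y Hy. now apply Hpast.
    + apply (open_gt 0 x Hx).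
Qed.

Lemma Ux_boundary_past t : t < 0 -> Ux U 0 t = 0.
Proof.
  intros Ht. apply (continuous_eq_on_right (fun y => Ux U y t)).
  - apply (continuous_pderiv_x U HU).
  - intros y Hy. apply (pderiv_vanish_past y t Hy Ht).
Qed.

Lemma differentiable_outgoing_field a b :
  differentiable_pt_lim (fun p q => Ut U p q + Ux U p q) a b
    (Utx U a b + Uxx U a b) (Utt U a b + Uxt U a b).
Proof.
  apply filterdiff_differentiable_pt_lim.
  apply (is_derive_filterdiff (fun p q => Ut U p q + Ux U p q) a b
          (fun p q => Utx U p q + Uxx U p q) (Utt U a b + Uxt U a b)).
  - apply filter_forall. intros [p q]; simpl.
    apply (is_derive_plus (fun z => Ut U z q) (fun z => Ux U z q)); apply is_derive_pderiv_x; auto.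
  - apply (is_derive_plus (fun z => Ut U a z) (fun z => Ux U a z)); apply is_derive_pderiv_t; auto.
  - apply (proj1 (continuity_2d_pt_filterlim (fun p q => Utx U p q + Uxx U p q) a b)).
    apply continuity_2d_pt_plus; apply continuity_2d_pderiv; auto.
Qed.

(* Where [A] is constant the equation is [u_tt = u_xx], so [u_t + u_x] is
   constant along the characteristics [x + t = const]. *)
Lemma is_derive_outgoing_characteristic x0 t0 s : l < x0 -> 0 <= s ->
  is_derive (fun s => Ut U (x0 + s) (t0 - s) + Ux U (x0 + s) (t0 - s)) s 0.
Proof.
  intros Hx0 Hs. apply is_derive_Reals.
  assert (Hx0s : 0 < x0 + s) by lra.
  assert (Hchain := derivable_pt_lim_comp_2d (fun p q => Ut U p q + Ux U p q)
            (fun s => x0 + s) (fun s => t0 - s) s _ _ 1 (-1)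
            (differentiable_outgoing_field (x0 + s) (t0 - s))).
  replace 0 with ((Utx U (x0 + s) (t0 - s) + Uxx U (x0 + s) (t0 - s)) * 1 +
                  (Utt U (x0 + s) (t0 - s) + Uxt U (x0 + s) (t0 - s)) * -1).
  - apply Hchain; apply is_derive_Reals; auto_derive; auto; ring.
  - rewrite (pderiv_tx_comm U HU).
    assert (HA' : Derive A (x0 + s) = 0).
    { apply Derive_locally_const with Ainf. apply (filter_imp (fun y => l < y)).
      - intros y Hy; auto.
      - apply (open_gt l); lra. }
    assert (Hw := Hwave (x0 + s) (t0 - s) Hx0s). rewrite HA' in Hw.
    assert (Hp := HApos (x0 + s)).
    assert (Utt U (x0 + s) (t0 - s) = Uxx U (x0 + s) (t0 - s)).
    { apply (Rmult_eq_reg_l (A (x0 + s))); lra. }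
    lra.
Qed.

Lemma outgoing : forall x t, l <= x -> Ut U x t + Ux U x t = 0.
Proof.
  assert (Hgt : forall x0 t0, l < x0 -> Ut U x0 t0 + Ux U x0 t0 = 0).
  { intros x0 t0 Hx0.
    set (g := fun s => Ut U (x0 + s) (t0 - s) + Ux U (x0 + s) (t0 - s)).
    set (S := Rabs t0 + 1).
    assert (HS : 0 < S) by (unfold S; pose proof (Rabs_pos t0); lra).
    assert (HgS : g S = 0).
    { unfold g. pose proof (Rle_abs t0).
      destruct (pderiv_vanish_past (x0 + S) (t0 - S)) as [E1 E2]; unfold S in *; lra. }
    destruct (MVT_gen g 0 S (fun _ => 0)) as [c [_ Hc]].
    - intros s Hs. rewrite Rmin_left in Hs by lra. apply is_derive_outgoing_characteristic; lra.
    - intros s Hs. rewrite Rmin_left in Hs by lra. apply continuity_pt_filterlim.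
      eapply is_derive_continuous, is_derive_outgoing_characteristic; lra.
    - unfold g in Hc, HgS. rewrite Rplus_0_r, Rminus_0_r in Hc. lra. }
  intros x t Hx. destruct (Rle_lt_or_eq_dec l x Hx) as [Hlt|Heq]; auto.
  subst x. apply (continuous_eq_on_right (fun y => Ut U y t + Ux U y t) l 0).
  - apply (continuous_plus (fun y => Ut U y t) (fun y => Ux U y t));
      apply (continuous_pderiv_x U HU).
  - intros y Hy. now apply Hgt.
Qed.

Lemma energy_density_continuous t z : continuous (energy_density A U t) z.
Proof.
  apply (continuity_2d_pt_continuous_snd (energy_density A U) t z).
  unfold energy_density, Rdiv. solve_continuity_2d HU; auto using A_continuity_pt.
Qed.

Lemma is_RInt_energy t : is_RInt (energy_density A U t) 0 l (energy A U l t).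
Proof.
  apply (@RInt_correct R_CompleteNormedModule), ex_RInt_continuous_R.
  apply energy_density_continuous.
Qed.

Lemma energy_nonneg t : 0 <= energy A U l t.
Proof.
  apply RInt_ge_0; [lra | apply ex_RInt_continuous_R, energy_density_continuous |].
  intros x _. unfold energy_density. specialize (HApos x).
  assert (0 <= Ut U x t * Ut U x t + Ux U x t * Ux U x t) by nra. nra.
Qed.

Lemma energy_past t : t < 0 -> energy A U l t = 0.
Proof.
  intros Ht. unfold energy. rewrite (RInt_ext _ (fun _ => 0)).
  - rewrite RInt_const. unfold scal; simpl; unfold mult; simpl. apply Rmult_0_r.
  - intros x Hx. rewrite Rmin_left, Rmax_right in Hx by lra.
    destruct (pderiv_vanish_past x t) as [E1 E2]; try lra.
    unfold energy_density. rewrite E1, E2. lra.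
Qed.

Lemma is_derive_energy t :
  is_derive (energy A U l) t (A l * Ux U l t * Ut U l t - A 0 * Ux U 0 t * Ut U 0 t).
Proof.
  set (dG := fun s x => Derive A x * Ux U x s * Ut U x s + A x * Uxx U x s * Ut U x s
                        + A x * Ux U x s * Utx U x s).
  assert (Hflux : is_RInt (dG t) 0 l
                    (minus (A l * Ux U l t * Ut U l t) (A 0 * Ux U 0 t * Ut U 0 t))).
  { apply (is_RInt_derive (fun x => A x * Ux U x t * Ut U x t)).
    - intros x _. unfold dG. auto_derive; [solve_ex_derive_pderiv HU; apply HAd |].
      change (Derive (fun x0 : R => A x0) x) with (Derive A x). unfold_pderiv_field.
    - intros x _. apply (continuity_2d_pt_continuous_snd dG t x). unfold dG.
      solve_continuity_2d HU; auto using A_continuity_pt. }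
  apply RInt_of_is_RInt in Hflux.
  replace (A l * Ux U l t * Ut U l t - A 0 * Ux U 0 t * Ut U 0 t) with (RInt (dG t) 0 l)
    by (rewrite Hflux; unfold minus, plus, opp; simpl; ring).
  rewrite (RInt_ext (dG t) (fun x => A x * (Ut U x t * Utt U x t + Ux U x t * Uxt U x t))).
  - apply (is_derive_RInt_param_2d (energy_density A U)
             (fun s x => A x * (Ut U x s * Utt U x s + Ux U x s * Uxt U x s))).
    + intros s x. unfold energy_density. auto_derive; [solve_ex_derive_pderiv HU |].
      unfold_pderiv_field.
    + intros s x. solve_continuity_2d HU; auto using A_continuity_pt.
    + intros s x. unfold energy_density, Rdiv. solve_continuity_2d HU; auto using A_continuity_pt.
  - intros x Hx. rewrite Rmin_left, Rmax_right in Hx by lra. unfold dG.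
    rewrite (pderiv_tx_comm U HU x t).
    match goal with |- ?a = ?b => change (@eq R a b) end.
    replace (A x * (Ut U x t * Utt U x t + Ux U x t * Uxt U x t))
      with (Ut U x t * (A x * Utt U x t) + A x * Ux U x t * Uxt U x t) by ring.
    rewrite Hwave by lra. ring.
Qed.

Lemma is_derive_morawetz K t :
  is_derive (morawetz K A U l) t
    (RInt (fun x => exp (K * x) * A x * (Utt U x t * Ux U x t + Ut U x t * Uxt U x t)) 0 l).
Proof.
  apply (is_derive_RInt_param_2d (fun s x => exp (K * x) * A x * Ut U x s * Ux U x s)
           (fun s x => exp (K * x) * A x * (Utt U x s * Ux U x s + Ut U x s * Uxt U x s))).
  - intros s x. auto_derive; [solve_ex_derive_pderiv HU | unfold_pderiv_field].
  - intros s x. solve_continuity_2d HU; auto using A_continuity_pt, continuity_pt_exp_scal.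
  - intros s x. solve_continuity_2d HU; auto using A_continuity_pt, continuity_pt_exp_scal.
Qed.

(* Integrating [(e^{Kx} A (u_t^2 + u_x^2) / 2)_x] and using the equation, the
   weight [e^{Kx}] with [K A >= A + |A'|] makes the interior term dominate the
   energy density. *)
Lemma Derive_morawetz_le K t : 0 <= K ->
  (forall x, 0 <= x <= l -> A x + Rabs (Derive A x) <= K * A x) ->
  Derive (morawetz K A U l) t <=
    exp (K * l) * A l * (Ut U l t * Ut U l t + Ux U l t * Ux U l t) / 2 - energy A U l t.
Proof.
  intros HK0 HK.
  set (dM := fun s x => exp (K * x) * A x * (Utt U x s * Ux U x s + Ut U x s * Uxt U x s)).
  assert (HdM : Derive (morawetz K A U l) t = RInt (dM t) 0 l)
    by exact (is_derive_unique _ _ _ (is_derive_morawetz K t)).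
  set (dG := fun s x => K * exp (K * x) * A x * (Ut U x s * Ut U x s + Ux U x s * Ux U x s) / 2
     + exp (K * x) * Derive A x * (Ut U x s * Ut U x s + Ux U x s * Ux U x s) / 2
     + exp (K * x) * A x * (Ut U x s * Utx U x s + Ux U x s * Uxx U x s)).
  assert (Hflux : is_RInt (dG t) 0 l
     (minus (exp (K * l) * A l * (Ut U l t * Ut U l t + Ux U l t * Ux U l t) / 2)
            (exp (K * 0) * A 0 * (Ut U 0 t * Ut U 0 t + Ux U 0 t * Ux U 0 t) / 2))).
  { apply (is_RInt_derive
      (fun x => exp (K * x) * A x * (Ut U x t * Ut U x t + Ux U x t * Ux U x t) / 2)).
    - intros x _. unfold dG. auto_derive; [solve_ex_derive_pderiv HU; apply HAd |].
      change (Derive (fun x0 : R => A x0) x) with (Derive A x). unfold_pderiv_field.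
    - intros x _. apply (continuity_2d_pt_continuous_snd dG t x). unfold dG, Rdiv.
      solve_continuity_2d HU; auto using A_continuity_pt, continuity_pt_exp_scal. }
  assert (Hdiff := is_RInt_minus _ _ _ _ _ _ Hflux (is_RInt_energy t)).
  assert (Hval := RInt_of_is_RInt _ _ _ _ Hdiff).
  assert (Hbdry0 : 0 <= exp (K * 0) * A 0 * (Ut U 0 t * Ut U 0 t + Ux U 0 t * Ux U 0 t) / 2).
  { assert (0 < exp (K * 0) * A 0) by (apply Rmult_lt_0_compat; [apply exp_pos | apply HApos]).
    assert (0 <= Ut U 0 t * Ut U 0 t + Ux U 0 t * Ux U 0 t) by nra. nra. }
  rewrite HdM. apply Rle_trans with (RInt (fun y => minus (dG t y) (energy_density A U t y)) 0 l).
  2:{ eapply Rle_trans; [right; apply Hval|]. unfold minus, plus, opp; simpl in Hbdry0 |- *. lra. }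
  apply RInt_le; [lra | | eexists; exact Hdiff |].
  - apply ex_RInt_continuous_R. intros z. apply (continuity_2d_pt_continuous_snd dM t z).
    unfold dM. solve_continuity_2d HU; auto using A_continuity_pt, continuity_pt_exp_scal.
  - intros x Hx. unfold dM, dG, energy_density. rewrite (pderiv_tx_comm U HU x t).
    assert (He : 1 <= exp (K * x)) by (rewrite <- exp_0; apply exp_monotone; nra).
    assert (Hdensity := weighted_energy_density_le (exp (K * x)) (A x) (Derive A x) K
                          (Ut U x t) (Ux U x t) He (HApos x) (HK x ltac:(lra))).
    assert (Hw := f_equal (fun z => exp (K * x) * Ux U x t * z) (Hwave x t ltac:(lra))).
    unfold minus, plus, opp; simpl in Hdensity, Hw |- *. lra.
Qed.

Lemma Rabs_morawetz_le K t : 0 <= K -> Rabs (morawetz K A U l t) <= exp (K * l) * energy A U l t.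
Proof.
  intros HK0.
  assert (Hcont : forall z, continuous (fun x => exp (K * x) * A x * Ut U x t * Ux U x t) z).
  { intros z. apply (continuity_2d_pt_continuous_snd
                      (fun s x => exp (K * x) * A x * Ut U x s * Ux U x s) t z).
    solve_continuity_2d HU; auto using A_continuity_pt, continuity_pt_exp_scal. }
  unfold morawetz. eapply Rle_trans; [apply abs_RInt_le; [lra | apply ex_RInt_continuous_R; auto]|].
  assert (Hscal := RInt_of_is_RInt _ _ _ _ (is_RInt_scal _ _ _ (exp (K * l)) _ (is_RInt_energy t))).
  eapply Rle_trans; [| right; exact Hscal].
  apply RInt_le; [lra | | |].
  - apply ex_RInt_continuous_R. intros z. apply (continuous_comp _ Rabs); auto.
    apply continuous_Rabs.
  - apply ex_RInt_continuous_R. intros z.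
    apply (continuous_scal_r (exp (K * l)) (energy_density A U t)), energy_density_continuous.
  - intros x Hx. unfold energy_density, scal; simpl; unfold mult; simpl.
    apply Rabs_cross_term_le; [apply exp_pos | apply exp_monotone; nra | apply HApos].
Qed.

Lemma morawetz_weight_exists :
  exists K, 0 <= K /\ forall x, 0 <= x <= l -> A x + Rabs (Derive A x) <= K * A x.
Proof.
  destruct (continuity_ab_min A 0 l ltac:(lra) (fun c _ => A_continuity_pt c)) as [mn [Hmn _]].
  assert (HRc : forall c, continuity_pt (fun x => Rabs (Derive A x)) c).
  { intros c. apply (continuity_pt_comp (Derive A) Rabs); [apply HA'c | apply Rcontinuity_abs]. }
  destruct (continuity_ab_maj (fun x => Rabs (Derive A x)) 0 l ltac:(lra) (fun c _ => HRc c))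
    as [mb [Hmb _]].
  assert (Hal := HApos mn). assert (Hbeta := Rabs_pos (Derive A mb)).
  exists (1 + Rabs (Derive A mb) / A mn). split.
  - assert (0 <= Rabs (Derive A mb) / A mn) by (apply Rdiv_le_0_compat; lra). lra.
  - intros x Hx. specialize (Hmn x Hx). specialize (Hmb x Hx).
    replace ((1 + Rabs (Derive A mb) / A mn) * A x)
      with (A x + Rabs (Derive A mb) * (A x / A mn)) by (field; lra).
    assert (1 <= A x / A mn).
    { apply (Rmult_le_reg_l (A mn)); [lra|].
      replace (A mn * (A x / A mn)) with (A x) by (field; lra). lra. }
    nra.
Qed.

(* After [b] the Neumann data vanish, the energy only leaks out through [x = l]
   at the rate [A_inf u_t(l)^2], which pays for the boundary term of the
   Morawetz estimate. *)
Lemma energy_exp_decay b : 0 <= b -> (forall t, b < t -> Ux U 0 t = 0) ->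
  exists k B, 0 < k /\ 0 <= B /\ forall t, energy A U l t <= B * exp (- k * t).
Proof.
  intros Hb Hquiet.
  destruct morawetz_weight_exists as [K [HK0 HK]].
  set (c := exp (K * l)). assert (Hc : 0 < c) by apply exp_pos.
  destruct (Lyapunov_exp_decay (energy A U l) (morawetz K A U l)
     (fun t => A l * Ux U l t * Ut U l t - A 0 * Ux U 0 t * Ut U 0 t)
     (Derive (morawetz K A U l)) c (b + 1)) as [k [B [Hk Hlate]]].
  - apply is_derive_energy.
  - intros t. apply Derive_correct. eexists. apply is_derive_morawetz.
  - apply energy_nonneg.
  - intros t. apply Rabs_morawetz_le; auto.
  - exact Hc.
  - intros t Ht.
    assert (HM := Derive_morawetz_le K t HK0 HK). fold c in HM.
    assert (Hout := outgoing l t (Rle_refl l)).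
    rewrite A_at_l in HM |- *. rewrite (Hquiet t ltac:(lra)).
    replace (Ux U l t) with (- Ut U l t) in HM |- * by lra.
    assert (Hq : 0 <= Ainf * (Ut U l t * Ut U l t))
      by (apply Rmult_le_pos; [left; apply Ainf_pos | apply Rle_0_sqr]).
    set (eps := / (2 * c)).
    assert (Heps : 0 < eps) by (apply Rinv_0_lt_compat; lra).
    assert (Hepsc : eps * c = / 2) by (unfold eps; field; lra).
    apply (Rmult_le_compat_l eps) in HM; [|lra].
    replace (eps * (c * Ainf * (Ut U l t * Ut U l t + - Ut U l t * - Ut U l t) / 2 - energy A U l t))
      with (eps * c * (Ainf * (Ut U l t * Ut U l t)) - eps * energy A U l t) in HM by field.
    rewrite Hepsc in HM.
    replace (Ainf * - Ut U l t * Ut U l t - A 0 * 0 * Ut U 0 t)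
      with (- (Ainf * (Ut U l t * Ut U l t))) by ring.
    lra.
  - destruct (exp_decay_of_eventual (energy A U l) k B (b + 1)) as [B' [HB' HE]]; auto.
    + intros t. apply continuity_pt_filterlim. eapply is_derive_continuous, is_derive_energy.
    + apply energy_nonneg.
    + apply energy_past.
    + lra.
    + exists k, B'. auto.
Qed.

Lemma is_derive_momentum t : is_derive (momentum A U l) t (A l * Ux U l t - A 0 * Ux U 0 t).
Proof.
  set (dG := fun s x => Derive A x * Ux U x s + A x * Uxx U x s).
  assert (Hflux : is_RInt (dG t) 0 l (minus (A l * Ux U l t) (A 0 * Ux U 0 t))).
  { apply (is_RInt_derive (fun x => A x * Ux U x t)).
    - intros x _. unfold dG. auto_derive; [solve_ex_derive_pderiv HU; apply HAd |].
      change (Derive (fun x0 : R => A x0) x) with (Derive A x). unfold_pderiv_field.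
    - intros x _. apply (continuity_2d_pt_continuous_snd dG t x). unfold dG.
      solve_continuity_2d HU; auto using A_continuity_pt. }
  apply RInt_of_is_RInt in Hflux.
  replace (A l * Ux U l t - A 0 * Ux U 0 t) with (RInt (dG t) 0 l)
    by (rewrite Hflux; unfold minus, plus, opp; simpl; ring).
  rewrite (RInt_ext (dG t) (fun x => A x * Utt U x t)).
  - apply (is_derive_RInt_param_2d (fun s x => A x * Ut U x s) (fun s x => A x * Utt U x s)).
    + intros s x. auto_derive; [solve_ex_derive_pderiv HU | unfold_pderiv_field].
    + intros s x. solve_continuity_2d HU; auto using A_continuity_pt.
    + intros s x. solve_continuity_2d HU; auto using A_continuity_pt.
  - intros x Hx. rewrite Rmin_left, Rmax_right in Hx by lra. unfold dG.
    match goal with |- ?a = ?b => change (@eq R a b) end.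
    symmetry. apply Hwave; lra.
Qed.

Lemma momentum_past t : t < 0 -> momentum A U l t = 0.
Proof.
  intros Ht. unfold momentum. rewrite (RInt_ext _ (fun _ => 0)).
  - rewrite RInt_const. unfold scal; simpl; unfold mult; simpl. apply Rmult_0_r.
  - intros x Hx. rewrite Rmin_left, Rmax_right in Hx by lra.
    destruct (pderiv_vanish_past x t) as [E1 _]; try lra. rewrite E1. apply Rmult_0_r.
Qed.

(* Integrating the equation in [x] over [0, l]: the flux through [x = l] is
   [-A_inf u_t(l, .)] by the outgoing condition, and through [x = 0] it is the
   Neumann datum. *)
Lemma momentum_conservation t : A 0 = 1 ->
  momentum A U l t + Ainf * U l t + RInt (fun s => Ux U 0 s) 0 t = 0.
Proof.
  intros HA0.
  set (D := fun s => momentum A U l s + Ainf * U l s + RInt (fun s => Ux U 0 s) 0 s).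
  assert (HD : forall s, is_derive D s 0).
  { intros s.
    assert (Hprim : is_derive (fun s => RInt (fun s => Ux U 0 s) 0 s) s (Ux U 0 s)).
    { apply (is_derive_RInt _ _ 0 s); [|apply continuous_pderiv_t; auto].
      apply filter_forall. intros y. apply (@RInt_correct R_CompleteNormedModule).
      apply ex_RInt_continuous_R. intros; apply continuous_pderiv_t; auto. }
    assert (Hsum := is_derive_plus _ _ s _ _
                      (is_derive_plus _ _ s _ _ (is_derive_momentum s)
                         (is_derive_scal _ s Ainf _ (is_derive_pderiv_t U HU nil l s))) Hprim).
    assert (Hout := outgoing l s (Rle_refl l)).
    rewrite A_at_l, HA0 in Hsum.
    match type of Hsum with is_derive _ _ ?v => assert (Hval : v = 0) end.
    { replace (Ux U l s) with (- Ut U l s) by lra. unfold plus, scal; simpl; unfold mult; simpl. ring. }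
    rewrite Hval in Hsum.
    exact Hsum. }
  assert (HDpast : D (-1) = 0).
  { unfold D. rewrite momentum_past, (Hpast l (-1)) by lra.
    rewrite (RInt_ext _ (fun _ => 0)).
    - rewrite RInt_const. unfold scal; simpl; unfold mult; simpl. ring.
    - intros s Hs. rewrite Rmin_right, Rmax_left in Hs by lra. apply Ux_boundary_past. lra. }
  destruct (MVT_gen D (-1) t (fun _ => 0)) as [c [_ Hc]].
  - intros; apply HD.
  - intros; apply continuity_pt_filterlim; eapply is_derive_continuous; apply HD.
  - fold (D t). lra.
Qed.

Lemma trace_le al Amax t d : 0 < al -> (forall x, 0 <= x <= l -> al <= A x <= Amax) -> 0 < d ->
  Rabs (U l t - U 0 t + / Ainf * momentum A U l t) <=
    (1 + Amax / Ainf) / 2 * (d * (2 / al) * energy A U l t + l / d).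
Proof.
  intros Hal HAb Hd.
  assert (HUx : is_RInt (fun x => Ux U x t) 0 l (minus (U l t) (U 0 t))).
  { apply (is_RInt_derive (fun x => U x t)).
    - intros x _. apply (is_derive_pderiv_x U HU nil).
    - intros x _. apply (continuous_pderiv_x U HU). }
  assert (HQc : forall z, continuous (fun x => A x * Ut U x t) z).
  { intros z. apply (continuity_2d_pt_continuous_snd (fun s x => A x * Ut U x s) t z).
    solve_continuity_2d HU; auto using A_continuity_pt. }
  assert (HQ : is_RInt (fun x => A x * Ut U x t) 0 l (momentum A U l t)).
  { apply (@RInt_correct R_CompleteNormedModule), ex_RInt_continuous_R. auto. }
  assert (Hg := is_RInt_plus _ _ _ _ _ _ HUx (is_RInt_scal _ _ _ (/ Ainf) _ HQ)).
  assert (Hr := is_RInt_scal _ _ _ ((1 + Amax / Ainf) / 2) _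
                 (is_RInt_plus _ _ _ _ _ _ (is_RInt_scal _ _ _ (d * (2 / al)) _ (is_RInt_energy t))
                    (is_RInt_const 0 l (/ d)))).
  assert (Hsplit : U l t - U 0 t + / Ainf * momentum A U l t =
                   RInt (fun y => plus (Ux U y t) (scal (/ Ainf) (A y * Ut U y t))) 0 l).
  { symmetry. etransitivity; [apply (RInt_of_is_RInt _ _ _ _ Hg)|]. reflexivity. }
  rewrite Hsplit.
  assert (Hbound : RInt (fun y => scal ((1 + Amax / Ainf) / 2)
                     (plus (scal (d * (2 / al)) (energy_density A U t y)) (/ d))) 0 l =
                   (1 + Amax / Ainf) / 2 * (d * (2 / al) * energy A U l t + l / d)).
  { etransitivity; [apply (RInt_of_is_RInt _ _ _ _ Hr)|].
    unfold scal, plus; simpl. unfold mult, plus; simpl. unfold Rdiv. ring. }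
  rewrite <- Hbound.
  eapply Rle_trans; [apply abs_RInt_le; [lra | eexists; exact Hg]|].
  apply RInt_le; [lra | | eexists; exact Hr |].
  - apply ex_RInt_continuous_R. intros z. apply (continuous_comp _ Rabs); [|apply continuous_Rabs].
    apply (continuous_plus (fun y => Ux U y t)); [apply (continuous_pderiv_x U HU)|].
    apply (continuous_scal_r (/ Ainf) (fun y => A y * Ut U y t)). auto.
  - intros x Hx. unfold scal, plus; simpl. unfold mult, plus; simpl. unfold energy_density.
    destruct (HAb x ltac:(lra)). apply trace_integrand_le; auto using Ainf_pos.
Qed.

Lemma trace_exp_decay k B : 0 < k -> 0 <= B -> (forall t, energy A U l t <= B * exp (- k * t)) ->
  exists C C', 0 < C /\ 0 < C' /\ forall t,
    Rabs (U l t - U 0 t + / Ainf * momentum A U l t) <= C * exp (- C' * t).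
Proof.
  intros Hk HB HE.
  destruct (continuity_ab_min A 0 l ltac:(lra) (fun c _ => A_continuity_pt c)) as [mn [Hmn _]].
  destruct (continuity_ab_maj A 0 l ltac:(lra) (fun c _ => A_continuity_pt c)) as [mx [Hmx _]].
  set (al := A mn). set (Amax := A mx).
  assert (Hal : 0 < al) by apply HApos. assert (HAmax : 0 < Amax) by apply HApos.
  assert (HAinf := Ainf_pos).
  set (C0 := (1 + Amax / Ainf) / 2).
  assert (HC0 : 0 <= C0) by (assert (0 <= Amax / Ainf) by (apply Rdiv_le_0_compat; lra); unfold C0; lra).
  assert (HBal : 0 <= 2 / al * B) by (apply Rmult_le_pos; [apply Rdiv_le_0_compat|]; lra).
  exists (C0 * (2 / al * B + l) + 1), (k / 2).
  split; [assert (0 <= C0 * (2 / al * B + l)) by (apply Rmult_le_pos; lra); lra|].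
  split; [lra|].
  intros t. set (d := exp (k / 2 * t)). assert (Hd : 0 < d) by apply exp_pos.
  assert (Hdecay : 0 < exp (- (k / 2) * t)) by apply exp_pos.
  assert (HAb : forall x, 0 <= x <= l -> al <= A x <= Amax)
    by (intros x Hx; split; [apply Hmn | apply Hmx]; auto).
  eapply Rle_trans; [apply (trace_le al Amax t d Hal HAb Hd)|]. fold C0.
  assert (Hhalf : d * exp (- k * t) = exp (- (k / 2) * t)).
  { unfold d. rewrite <- exp_plus. f_equal. field. }
  assert (Hinv : l / d = l * exp (- (k / 2) * t)).
  { unfold d, Rdiv. f_equal. rewrite <- exp_Ropp. f_equal. ring. }
  assert (Hen : d * (2 / al) * energy A U l t <= 2 / al * B * exp (- (k / 2) * t)).
  { rewrite <- Hhalf.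
    replace (2 / al * B * (d * exp (- k * t))) with (d * (2 / al) * (B * exp (- k * t))) by ring.
    apply Rmult_le_compat_l; [apply Rmult_le_pos; [lra | apply Rdiv_le_0_compat; lra] | apply HE]. }
  rewrite Hinv.
  apply Rle_trans with (C0 * (2 / al * B + l) * exp (- (k / 2) * t)).
  - replace (C0 * (2 / al * B + l) * exp (- (k / 2) * t))
      with (C0 * (2 / al * B * exp (- (k / 2) * t) + l * exp (- (k / 2) * t))) by ring.
    apply Rmult_le_compat_l; lra.
  - apply Rmult_le_compat_r; lra.
Qed.

End WaveOnHalfLine.

Theorem mainTheorem13 (A : R -> R) (Ainf l : R) (phi : R -> R) (u : R -> R -> R) :
  admissible A ->
  0 < l ->
  (forall x, l < x -> A x = Ainf) ->
  test_fun_pos phi ->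
  smooth_half u ->
  (forall x t, 0 < x -> boxA A u x t = 0) ->
  (forall t, filterlim (fun h => (u h t - u 0 t) / h) (at_right 0) (locally (phi t))) ->
  (forall x t, 0 < x -> t < 0 -> u x t = 0) ->
  exists C C' : R, 0 < C /\ 0 < C' /\
    forall t : R,
      Rabs (u 0 t - (- (/ Ainf) * RInt phi 0 t)) <= C * exp (- C' * t).
Proof.
  intros HA Hl HAl Hphi [U [HU Hu]] Hbox Hneu Hpast.
  destruct HA as [HAs [HApos [xm [xp [Ai [Hxm [_ [_ [HA1 _]]]]]]]]].
  destruct Hphi as [_ [a [b [Ha [Hab Hphi0]]]]].
  assert (HAd : forall x, ex_derive A x) by (intros x; exact (HAs 0%nat x)).
  assert (HA'c : forall x, continuity_pt (Derive A) x)
    by (intros x; apply ex_derive_continuity_pt, (HAs 1%nat x)).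
  assert (Hwave := wave_equation_of_boxA A u U Hu HU HAd HApos Hbox).
  assert (Htrace := neumann_trace_of_extension phi u U Hu HU Hneu).
  assert (HUpast : forall x t, 0 < x -> t < 0 -> U x t = 0)
    by (intros x t Hx Ht; rewrite Hu by lra; auto).
  destruct (energy_exp_decay A U Ainf l HU HAd HA'c HApos Hl HAl Hwave HUpast b)
    as [k [B [Hk [HB HE]]]]; [lra | intros t Ht; rewrite Htrace; apply Hphi0; lra |].
  destruct (trace_exp_decay A U Ainf l HU HAd HApos Hl HAl k B Hk HB HE)
    as [C [C' [HC [HC' Hdecay]]]].
  exists C, C'. split; [exact HC | split; [exact HC' |]].
  intros t.
  assert (Hcons := momentum_conservation A U Ainf l HU HAd HA'c HApos Hl HAl Hwave HUpast t
                     (HA1 0 Hxm)).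
  rewrite (RInt_ext _ phi) in Hcons by (intros s _; apply Htrace).
  assert (HAinf := Ainf_pos A Ainf l HApos HAl).
  replace (u 0 t - - / Ainf * RInt phi 0 t)
    with (- (U l t - U 0 t + / Ainf * momentum A U l t)).
  - rewrite Rabs_Ropp. apply Hdecay.
  - rewrite <- Hu by lra.
    replace (RInt phi 0 t) with (- (momentum A U l t + Ainf * U l t)) by lra.
    field. lra.
Qed.
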